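(* Let $X$ be a Banach space, $D\subset X$ closed, bounded and convex, and $\tau$ a locally convex topology on $D$ containing the relative weak topology of $D$. Let $C$ be a convex subset of $D$, $\varepsilon>0$, $n,k\in\mathbb{N}$ and $\{x_1,\dots,x_k\}\subset X$. If $(\widetilde O_i)_{i=1}^n$ are nonempty sets in $\tau|_C$, then there is another $n$-tuple $(O_i)_{i=1}^n$ of nonempty $\tau|_C$-open sets with $O_i\subset\widetilde O_i$ such that $$\operatorname{diam}\Big(\sum_{i=1}^n\lambda(i)O_i\Big)\le 2\,d\Big(\{x_1,\dots,x_k\},\sum_{i=1}^n\lambda(i)O_i\Big)+\varepsilon\quad\text{for all }\lambda\in S^+_{\ell_1^n}.$$
   Context: $\tau|_C$ is the topology induced by $\tau$ on $C$; locally convex means having a basis of convex open sets. $S^+_{\ell_1^n}=\{\lambda\in\mathbb{R}^n:\lambda(i)\ge0,\ \sum_i\lambda(i)=1\}$. Sums of sets are Minkowski sums and $d(A,B)=\inf\{\|a-b\|:a\in A,b\in B\}$. *)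

From HB Require Import structures.
From mathcomp Require Import all_boot all_order all_algebra.
From mathcomp Require Import all_classical all_reals all_analysis.
Set Implicit Arguments. Unset Strict Implicit. Unset Printing Implicit Defensive.
Import Order.TTheory GRing.Theory Num.Theory.
Import numFieldNormedType.Exports.
Local Open Scope classical_set_scope.
Local Open Scope ring_scope.

Section Defs.
Context {R : realType} {X : normedModType R}.

Definition cvx (A : set X) : Prop :=
  forall x y (t : R), A x -> A y -> 0 <= t <= 1 -> A (t *: x + (1 - t) *: y).

Definition nbounded (A : set X) : Prop :=
  exists M : R, forall x, A x -> `|x| <= M.

Definition cont_lin_functional (f : X -> R) : Prop :=
  (forall (a : R) (u v : X), f (a *: u + v) = a * f u + f v) /\ continuous f.

Definition topology_on (D : set X) (tau : set (set X)) : Prop :=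
  [/\ (forall U, tau U -> U `<=` D), tau set0, tau D,
      (forall F : set (set X), F `<=` tau -> tau (\bigcup_(U in F) U)) &
      (forall U V, tau U -> tau V -> tau (U `&` V))].

Definition loc_convex_top (tau : set (set X)) : Prop :=
  forall U x, tau U -> U x -> exists V, [/\ tau V, cvx V, V x & V `<=` U].

(* tau contains the relative weak topology of D: it suffices (tau being a
   topology) that tau contains the subbasic sets D /\ f^-1(W) *)
Definition contains_rel_weak (D : set X) (tau : set (set X)) : Prop :=
  forall f : X -> R, cont_lin_functional f ->
    forall W : set R, open W -> tau (D `&` f @^-1` W).

Definition rel_open (tau : set (set X)) (C : set X) (O : set X) : Prop :=
  exists U, tau U /\ O = U `&` C.

Definition simplexS (n : nat) (l : 'I_n -> R) : Prop :=
  (forall i, 0 <= l i) /\ \sum_(i < n) l i = 1.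

Definition minksum (n : nat) (l : 'I_n -> R) (O : 'I_n -> set X) : set X :=
  [set z | exists y : 'I_n -> X, (forall i, O i (y i)) /\ z = \sum_(i < n) l i *: y i].

Definition setdiam (A : set X) : \bar R :=
  ereal_sup [set (`|a - b|)%:E | a in A & b in A].

Definition setdist (A B : set X) : \bar R :=
  ereal_inf [set (`|a - b|)%:E | a in A & b in B].

End Defs.

From HB Require Import structures.
From mathcomp Require Import all_boot all_order all_algebra.
From mathcomp Require Import all_classical all_reals all_analysis.
From mathcomp Require Import lra ring.
Set Implicit Arguments. Unset Strict Implicit. Unset Printing Implicit Defensive.
Import Order.TTheory GRing.Theory Num.Theory.
Import numFieldNormedType.Exports.
Local Open Scope classical_set_scope.
Local Open Scope ring_scope.

(* Fix weights l and a point y, and pick y_i in O_i such that s0 = sum_i l(i) y_i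
   nearly maximises `|s - y| over s in sum_i l(i) O_i.  A norming functional f of
   s0 - y (Hahn-Banach) has weakly open slices {u | |f u - f y_i| < r}; shrinking
   each O_i to its slice keeps f (s - y), hence `|s - y|, nearly maximal on the new
   combination, so that distances to y vary there by at most d.  Shrinking further
   preserves this, so it can be arranged successively for the finitely many pairs
   (l, x_j) with l on a grid of mesh 1/N.  A general l in the simplex is within 1/N
   of a grid point, which moves points of the combination by at most n M / N, and
   for a, b, s in the combination the triangle inequality through x_j gives
   `|a - b| <= 2 `|x_j - s| + eps. *)

Section NormingFunctional.
Context {R : realType} {X : normedModType R}.
Implicit Types (G : set (X * R)) (u v w : X) (a b c : R).

Definition lin_graph G := forall p q c, G p -> G q ->
  G (c *: p.1 + q.1, c * p.2 + q.2).

Definition norm_dominated G := forall p, G p -> p.2 <= `|p.1|.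

Definition graph_extend G u c :=
  [set p | exists w b t, G (w, b) /\ p = (w + t *: u, b + t * c)].

Lemma lin_graph00 G p : lin_graph G -> G p -> G (0, 0).
Proof.
by move=> linG Gp; have := linG _ _ (-1) Gp Gp; rewrite scaleN1r mulN1r !addNr.
Qed.

Lemma lin_graph_functional G u a b : lin_graph G -> norm_dominated G ->
  G (u, a) -> G (u, b) -> a = b.
Proof.
move=> linG domG Ga Gb.
have := domG _ (linG _ _ (-1) Ga Gb); have := domG _ (linG _ _ (-1) Gb Ga).
rewrite /= scaleN1r addNr normr0 !mulN1r; lra.
Qed.

Lemma graph_extend_sub G u c : G `<=` graph_extend G u c.
Proof. by move=> [w b] Gwb; exists w, b, 0; rewrite scale0r mul0r !addr0. Qed.

Lemma lin_graph_extend G u c : lin_graph G -> lin_graph (graph_extend G u c).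
Proof.
move=> linG p q k [w1 [b1 [t1 [G1 ->]]]] [w2 [b2 [t2 [G2 ->]]]].
exists (k *: w1 + w2), (k * b1 + b2), (k * t1 + t2).
split; first exact: linG _ _ k G1 G2.
congr (_, _) => /=; first by rewrite scalerDr scalerA scalerDl addrACA.
by rewrite mulrDr mulrA mulrDl addrACA.
Qed.

Lemma norm_dominated_extend G u c : lin_graph G -> norm_dominated G -> G (0, 0) ->
  (forall w b, G (w, b) -> b - `|w - u| <= c <= `|w + u| - b) ->
  norm_dominated (graph_extend G u c).
Proof.
move=> linG domG G00 cG _ [w [b [t [Gwb ->]]]] /=.
have scaled s : 0 < s -> G (s^-1 *: w, s^-1 * b).
  by move=> s0; have := linG _ _ s^-1 Gwb G00; rewrite !addr0.
have normZ_gt0 s z : 0 < s -> `|s *: z| = s * `|z| by move=> s0; rewrite normrZ gtr0_norm.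
have [t0|t0|->] := ltgtP t 0; last by rewrite scale0r mul0r !addr0; exact: domG Gwb.
- have s0 : 0 < - t by rewrite oppr_gt0.
  have /andP[cge _] := cG _ _ (scaled _ s0).
  have -> : w + t *: u = (- t) *: ((- t)^-1 *: w - u).
    by rewrite scalerDr scalerA mulfV ?gt_eqF // scale1r scalerN scaleNr opprK.
  rewrite normZ_gt0 //.
  by have := ler_wpM2l (ltW s0) cge; rewrite mulrBr mulrA mulfV ?gt_eqF // mul1r; lra.
- have /andP[_ cle] := cG _ _ (scaled _ t0).
  have -> : w + t *: u = t *: (t^-1 *: w + u).
    by rewrite scalerDr scalerA mulfV ?gt_eqF // scale1r.
  rewrite normZ_gt0 //.
  by have := ler_wpM2l (ltW t0) cle; rewrite mulrBr mulrA mulfV ?gt_eqF // mul1r; lra.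
Qed.

Lemma extension_slope G u : lin_graph G -> norm_dominated G -> G (0, 0) ->
  exists c, forall w b, G (w, b) -> b - `|w - u| <= c <= `|w + u| - b.
Proof.
move=> linG domG G00.
pose E := [set r | exists w b, G (w, b) /\ r = b - `|w - u|].
have E_ub : ubound E `|u|.
  move=> _ [w [b [Gwb ->]]]; have := domG _ Gwb => /=.
  by have := ler_distD u w 0; rewrite !subr0; lra.
have E_sup : has_sup E by split; [exists (0 - `|0 - u|), 0, 0 | exists `|u|].
exists (sup E) => w b Gwb; apply/andP; split.
  by apply: sup_upper_bound => //; exists w, b.
apply: ge_sup => [|_ [w' [b' [Gwb' ->]]]]; first by case: E_sup.
have := domG _ (linG _ _ 1 Gwb Gwb'); rewrite /= scale1r mul1r.
have : `|w + w'| <= `|w + u| + `|w' - u|.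
  by rewrite -[w + w'](_ : (w + u) + (w' - u) = _) ?ler_normD // addrACA subrr addr0.
lra.
Qed.

(* [G !=set0 -> _] rather than [G (v, `|v|)], so that the union of the empty
   chain also qualifies in Zorn's lemma *)
Definition norming_graph v G :=
  [/\ lin_graph G, norm_dominated G & (G !=set0 -> G (v, `|v|))].

Lemma norming_graph_maximal v : exists A,
  norming_graph v A /\ forall B, A `<` B -> ~ norming_graph v B.
Proof.
apply: Zorn_bigcup => F FP Ftot; split.
- move=> p q c [G1 FG1 G1p] [G2 FG2 G2q].
  have [G12|G21] := Ftot _ _ FG1 FG2.
  + by exists G2 => //; have [linG2 _ _] := FP _ FG2; exact: linG2 (G12 _ G1p) G2q.
  + by exists G1 => //; have [linG1 _ _] := FP _ FG1; exact: linG1 G1p (G21 _ G2q).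
- by move=> p [G FG Gp]; have [_ domG _] := FP _ FG; exact: domG.
- move=> [p [G FG Gp]]; exists G => //; have [_ _ vG] := FP _ FG; apply: vG.
  by exists p.
Qed.

Lemma norming_graph_line v :
  norming_graph v [set p | exists t, p = (t *: v, t * `|v|)].
Proof.
split.
- move=> p q c [t ->] [s ->]; exists (c * t + s) => /=.
  by rewrite scalerDl scalerA mulrDl mulrA.
- by move=> p [t ->] /=; rewrite normrZ ler_wpM2r // ler_norm.
- by move=> _; exists 1; rewrite scale1r mul1r.
Qed.

Lemma maximal_norming_graph_total v A : norming_graph v A ->
    (forall B, A `<` B -> ~ norming_graph v B) ->
  A (v, `|v|) /\ forall u, exists a, A (u, a).
Proof.
move=> [linA domA vA] maxA.
have Av : A (v, `|v|).
  apply: vA; apply: contrapT => A0; apply: (maxA _ _ (norming_graph_line v)).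
  have -> : A = set0 by apply/seteqP; split => // p Ap; apply: A0; exists p.
  split; first exact: sub0set.
  by move=> /(_ (v, `|v|)) line0; apply: line0; exists 1; rewrite scale1r mul1r.
split => // u; apply/not_existsP => noA.
have A00 := lin_graph00 linA Av.
have [c cA] := extension_slope u linA domA A00.
apply: (maxA (graph_extend A u c)); last first.
  split; first exact: lin_graph_extend.
    exact: norm_dominated_extend A00 cA.
  by move=> _; exact: graph_extend_sub.
split; first exact: graph_extend_sub.
move=> /(_ (u, c)) ext; apply: (noA c); apply: ext.
by exists 0, 0, 1; rewrite scale1r mul1r !add0r.
Qed.

Lemma norming_functional v : exists f : X -> R,
  [/\ forall a u w, f (a *: u + w) = a * f u + f w,
      forall u, f u <= `|u| & f v = `|v|].
Proof.
have [A [Anorm Amax]] := norming_graph_maximal v.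
have [Av totA] := maximal_norming_graph_total Anorm Amax.
case: Anorm => linA domA _.
pose f u := sval (cid (totA u)).
have Af u : A (u, f u) by rewrite /f; case: cid.
exists f; split.
- move=> a u w.
  exact: lin_graph_functional linA domA (Af _) (linA _ _ a (Af u) (Af w)).
- by move=> u; exact: domA _ (Af u).
- exact: lin_graph_functional linA domA (Af v) Av.
Qed.

End NormingFunctional.

Section LinearFunctional.
Context {R : realType} {X : normedModType R}.
Variable f : X -> R.
Hypothesis f_lin : forall a u w, f (a *: u + w) = a * f u + f w.

Lemma lin_fun0 : f 0 = 0.
Proof. by have := f_lin 1 0 0; rewrite scale1r addr0 mul1r; lra. Qed.

Lemma lin_funB u w : f (u - w) = f u - f w.
Proof.
have fN z : f (- z) = - f z.
  by rewrite -[- z]addr0 -scaleN1r f_lin lin_fun0 addr0 mulN1r.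
by rewrite -{1}[u]scale1r f_lin mul1r fN.
Qed.

Lemma lin_fun_sum n (l : 'I_n -> R) (u : 'I_n -> X) :
  f (\sum_(i < n) l i *: u i) = \sum_(i < n) l i * f (u i).
Proof.
apply: (big_ind2 (fun z r => f z = r)); first exact: lin_fun0.
  by move=> z1 r1 z2 r2 <- <-; rewrite -{1}[z1]scale1r f_lin mul1r.
by move=> i _; rewrite -[_ *: _]addr0 f_lin lin_fun0 addr0.
Qed.

Lemma lin_fun_continuous : (forall u, f u <= `|u|) -> continuous f.
Proof.
move=> f_le.
have f_lip u w : `|f u - f w| <= `|u - w|.
  have := f_le (u - w); have := f_le (w - u); rewrite !lin_funB (distrC w).
  by rewrite ler_norml => h1 h2; apply/andP; split; lra.
move=> u; apply/cvgrPdist_lt => e e0; near=> w.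
apply: le_lt_trans (f_lip _ _) _; near: w.
exact: (@cvgr_dist_lt _ _ _ (nbhs u) _ id u cvg_id e e0).
Unshelve. all: by end_near.
Qed.

End LinearFunctional.

Section WeakSlices.
Context {R : realType} {X : normedModType R}.
Variables (D C : set X) (tau : set (set X)).
Hypotheses (tau_top : topology_on D tau) (tau_weak : contains_rel_weak D tau)
  (CD : C `<=` D).

Lemma rel_open_slice O f (a r : R) : cont_lin_functional f -> rel_open tau C O ->
  rel_open tau C (O `&` [set u | `|f u - a| < r]).
Proof.
move=> f_cl [U [tU ->]]; exists (U `&` (D `&` f @^-1` ball a r)); split.
  case: tau_top => _ _ _ _ tauI; apply: tauI => //.
  by apply: tau_weak => //; exact: ball_open.
apply/seteqP; split => u /=; rewrite -ball_normE /ball_ /= distrC.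
  by move=> [[Uu Cu] fu]; split => //; split => //; split => //; exact: CD.
by move=> [[Uu [_ fu]] Cu].
Qed.

End WeakSlices.

Section DistanceOscillation.
Context {R : realType} {X : normedModType R}.

Definition dist_osc_le n (l : 'I_n -> R) (y : X) (d : R) (O : 'I_n -> set X) :=
  forall s s', minksum l O s -> minksum l O s' -> `|s - y| <= `|s' - y| + d.

Lemma minksum_sub n (l : 'I_n -> R) (O O' : 'I_n -> set X) :
  (forall i, O' i `<=` O i) -> minksum l O' `<=` minksum l O.
Proof. by move=> subO _ [u [Ou ->]]; exists u; split => // i; exact: subO. Qed.

Lemma dist_osc_le_sub n (l : 'I_n -> R) y d (O O' : 'I_n -> set X) :
  (forall i, O' i `<=` O i) -> dist_osc_le l y d O -> dist_osc_le l y d O'.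
Proof.
by move=> subO osc s s' Os Os'; exact: osc (minksum_sub subO Os) (minksum_sub subO Os').
Qed.

Lemma norm_combination_le (V : normedModType R) n (l : 'I_n -> R) (u : 'I_n -> V)
    r M :
  (forall i, `|l i| <= r) -> (forall i, `|u i| <= M) ->
  `|\sum_(i < n) l i *: u i| <= n%:R * r * M.
Proof.
move=> lr uM; apply: le_trans (ler_norm_sum _ _ _) _.
have -> : n%:R * r * M = \sum_(i < n) (r * M).
  by rewrite sumr_const card_ord -mulrA mulr_natl.
apply: ler_sum => i _; rewrite normrZ.
exact: ler_pM (normr_ge0 _) (normr_ge0 _) (lr i) (uM i).
Qed.

Lemma minksum_perturb n (l l' : 'I_n -> R) (O : 'I_n -> set X) r M a :
  (forall i, `|l i - l' i| <= r) -> (forall i u, O i u -> `|u| <= M) ->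
  minksum l O a -> exists2 a', minksum l' O a' & `|a - a'| <= n%:R * r * M.
Proof.
move=> ll' OM [u [Ou ->]]; exists (\sum_(i < n) l' i *: u i); first by exists u.
rewrite -sumrB; under eq_bigr do rewrite -scalerBl.
exact: norm_combination_le ll' (fun i => OM i _ (Ou i)).
Qed.

Lemma dist_osc_le_slices n (l : 'I_n -> R) (y : X) (d M : R) (O : 'I_n -> set X) :
  0 < d -> (forall i, `|l i| <= 1) -> (forall i u, O i u -> `|u| <= M) ->
  (forall i, O i !=set0) ->
  exists f (z : 'I_n -> X) (r : R),
    [/\ cont_lin_functional f, 0 < r, forall i, O i (z i) &
        dist_osc_le l y d (fun i => O i `&` [set u | `|f u - f (z i)| < r])].
Proof.
move=> d0 l1 OM O0.
pose V := [set `|s - y| | s in minksum l O].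
have V_sup : has_sup V.
  split.
    have /choice [z0 Oz0] : forall i, exists u, O i u by [].
    by exists `|\sum_(i < n) l i *: z0 i - y|, (\sum_(i < n) l i *: z0 i); first exists z0.
  exists (n%:R * 1 * M + `|y|) => _ [_ [u [Ou ->]] <-].
  apply: le_trans (ler_normB _ _) _; rewrite lerD2r.
  exact: norm_combination_le l1 (fun i => OM i _ (Ou i)).
have [_ [_ [z [Oz ->]] <-] z_max] := sup_adherent (divr_gt0 d0 (ltr0n R 2)) V_sup.
have [f [f_lin f_le f_s0]] := norming_functional (\sum_(i < n) l i *: z i - y).
pose r := d / 2 / n.+1%:R.
have r0 : 0 < r by rewrite !divr_gt0.
exists f, z, r; split => //; first by split => //; exact: lin_fun_continuous f_lin f_le.
move=> _ _ [u [Ou ->]] [u' [Ou' ->]].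
have le_sup : `|\sum_(i < n) l i *: u i - y| <= sup V.
  apply: sup_upper_bound => //; exists (\sum_(i < n) l i *: u i) => //.
  by exists u; split => // i; case: (Ou i).
have nr_le : n%:R * 1 * r <= d / 2.
  rewrite mulr1 /r mulrCA ler_piMr ?divr_ge0 ?ltW //.
  by rewrite ltr_pdivrMr ?ltr0n // mul1r ltr_nat.
have near_s0 : `|\sum_(i < n) l i * f (u' i) - \sum_(i < n) l i * f (z i)| <= d / 2.
  apply: le_trans nr_le; rewrite -sumrB; under eq_bigr do rewrite -mulrBr.
  by apply: (@norm_combination_le R^o) => // i; exact/ltW/(Ou' i).2.
move: near_s0 f_s0 (f_le (\sum_(i < n) l i *: u' i - y)).
rewrite ler_norml !(lin_funB f_lin) !(lin_fun_sum f_lin) => /andP[near_s0 _]; lra.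
Qed.

End DistanceOscillation.

Section Shrinking.
Context {R : realType} {X : normedModType R}.
Variables (D C : set X) (tau : set (set X)) (M : R).
Hypotheses (tau_top : topology_on D tau) (tau_weak : contains_rel_weak D tau)
  (CD : C `<=` D) (DM : forall u, D u -> `|u| <= M).

Lemma rel_open_norm_le O u : rel_open tau C O -> O u -> `|u| <= M.
Proof. by case=> U [_ ->] [_ /CD]; exact: DM. Qed.

Lemma shrink_dist_osc n (O : 'I_n -> set X) (l : 'I_n -> R) (y : X) (d : R) :
  0 < d -> (forall i, `|l i| <= 1) ->
  (forall i, rel_open tau C (O i)) -> (forall i, O i !=set0) ->
  exists O' : 'I_n -> set X, [/\ forall i, rel_open tau C (O' i),
    forall i, O' i !=set0, forall i, O' i `<=` O i & dist_osc_le l y d O'].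
Proof.
move=> d0 l1 O_open O0.
have OM i u : O i u -> `|u| <= M by exact: rel_open_norm_le (O_open i).
have [f [z [r [f_cl r0 Oz osc]]]] := dist_osc_le_slices y d0 l1 OM O0.
exists (fun i => O i `&` [set u | `|f u - f (z i)| < r]); split => //.
- by move=> i; exact: (rel_open_slice tau_top tau_weak CD _ _ f_cl (O_open i)).
- by move=> i; exists (z i); split; rewrite //= subrr normr0.
Qed.

Lemma shrink_dist_osc_seq n (O : 'I_n -> set X) (T : eqType)
    (lam : T -> 'I_n -> R) (pt : T -> X) (s : seq T) (d : R) :
  0 < d -> (forall t i, `|lam t i| <= 1) ->
  (forall i, rel_open tau C (O i)) -> (forall i, O i !=set0) ->
  exists O' : 'I_n -> set X, [/\ forall i, rel_open tau C (O' i),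
    forall i, O' i !=set0, forall i, O' i `<=` O i &
    forall t, t \in s -> dist_osc_le (lam t) (pt t) d O'].
Proof.
move=> d0 lam1 O_open O0; elim: s => [|t s [W [W_open W0 WO oscW]]].
  by exists O; split => // i u.
have [W' [W'_open W'0 W'W oscW']] := shrink_dist_osc (pt t) d0 (lam1 t) W_open W0.
exists W'; split => // [i u /W'W/WO //|t'].
by rewrite inE => /predU1P[-> //|t's]; exact: dist_osc_le_sub W'W (oscW _ t's).
Qed.

End Shrinking.

Section DiameterDistance.
Context {R : realType} {X : normedModType R}.

Lemma setdiam_le_setdist (A B : set X) (e : R) :
  (forall a b s z, A a -> A b -> A s -> B z -> `|a - b| <= 2 * `|z - s| + e) ->
  (setdiam A <= 2%:E * setdist B A + e%:E)%E.
Proof.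
move=> ABe; apply: ge_ereal_sup => _ [a Aa [b Ab <-]].
have : (((`|a - b| - e) / 2)%:E <= setdist B A)%E.
  apply: le_ereal_inf_tmp => _ [z Bz [s As <-]].
  by rewrite lee_fin; have := ABe a b s z Aa Ab As Bz; lra.
move=> /(lee_wpmul2l (lee0n 2)) /(leeD2r e%:E); apply: le_trans.
by rewrite -EFinM -EFinD lee_fin; lra.
Qed.

Lemma dist_le_through (a a' b b' s s' z : X) (e d : R) :
  `|a - a'| <= e -> `|b - b'| <= e -> `|s - s'| <= e ->
  `|a' - z| <= `|s' - z| + d -> `|b' - z| <= `|s' - z| + d ->
  `|a - b| <= 2 * `|z - s| + (4 * e + 2 * d).
Proof.
have := ler_distD a' a b; have := ler_distD z a' b; have := ler_distD b' z b.
have := ler_distD s s' z.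
rewrite (distrC z b') (distrC b' b) (distrC s' s) (distrC s z); lra.
Qed.

End DiameterDistance.

Lemma exists_nat_div_le (R : realType) (c e : R) :
  0 < e -> exists N, (0 < N)%N /\ c / N%:R <= e.
Proof.
move=> e0; exists (Num.truncn (c / e)).+1; split => //.
rewrite ler_pdivrMr ?ltr0n // mulrC; apply/ltW.
by rewrite -ltr_pdivrMr // truncnS_gt.
Qed.

Lemma simplex_grid_approx (R : realType) n N (l : 'I_n -> R) :
  simplexS l -> (0 < N)%N ->
  exists m : {ffun 'I_n -> 'I_N.+1}, forall i, `|l i - (m i)%:R / N%:R| <= N%:R^-1.
Proof.
move=> [l0 l_sum] N0; have N0' : 0 < N%:R :> R by rewrite ltr0n.
have l1 i : l i <= 1 by rewrite -l_sum (bigD1 i) //= lerDl sumr_ge0.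
have trunc_lt i : (Num.truncn (l i * N%:R) < N.+1)%N.
  rewrite ltnS -(ler_nat R) (le_trans _ (_ : l i * N%:R <= N%:R)) //.
    by rewrite truncn_le mulr_ge0.
  by rewrite ler_piMl.
exists [ffun i => Ordinal (trunc_lt i)] => i; rewrite ffunE /=.
have /andP[_ hi] := truncn_itv (mulr_ge0 (l0 i) (ler0n R N)).
have -> : l i - (Num.truncn (l i * N%:R))%:R / N%:R
          = (l i * N%:R - (Num.truncn (l i * N%:R))%:R) / N%:R.
  by rewrite mulrBl mulfK ?gt_eqF.
rewrite normrM ger0_norm ?subr_ge0 ?truncn_le ?mulr_ge0 // ger0_norm ?invr_ge0 //.
rewrite -[X in _ <= X]mul1r ler_pM2r ?invr_gt0 //.
by move: hi; rewrite -natr1; lra.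
Qed.

Theorem lemma2p5 (R : realType) (X : completeNormedModType R)
  (D : set X) (tau : set (set X)) (C : set X) (eps : R) (n k : nat)
  (x : 'I_k -> X) (Ot : 'I_n -> set X) :
  closed D -> nbounded D -> cvx D ->
  topology_on D tau -> loc_convex_top tau -> contains_rel_weak D tau ->
  C `<=` D -> cvx C -> 0 < eps ->
  (forall i, rel_open tau C (Ot i) /\ Ot i !=set0) ->
  exists O : 'I_n -> set X,
    [/\ (forall i, rel_open tau C (O i)), (forall i, O i !=set0),
        (forall i, O i `<=` Ot i) &
        (forall l : 'I_n -> R, simplexS l ->
           (setdiam (minksum l O) <= 2%:E * setdist (range x) (minksum l O) + eps%:E)%E)].
Proof.
move=> _ [M DM] _ tau_top _ tau_weak CD _ eps0 Ot_open.
have [N [N0 NM]] := exists_nat_div_le (n%:R * M) (divr_gt0 eps0 (ltr0n R 8)).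
pose T := ({ffun 'I_n -> 'I_N.+1} * 'I_k)%type.
pose grid (t : T) i := (t.1 i)%:R / N%:R : R.
have grid1 t i : `|grid t i| <= 1.
  by rewrite ger0_norm ?divr_ge0 // ler_pdivrMr ?ltr0n // mul1r ler_nat -ltnS.
have [W [W_open W0 WOt osc]] := shrink_dist_osc_seq tau_top tau_weak CD DM
  (fun t => x t.2) (enum (@predT T)) (divr_gt0 eps0 (ltr0n R 4)) grid1
  (fun i => (Ot_open i).1) (fun i => (Ot_open i).2).
exists W; split => // l lS.
have WM i u : W i u -> `|u| <= M by exact: (rel_open_norm_le CD DM (W_open i)).
have [m lm] := simplex_grid_approx lS N0.
apply: setdiam_le_setdist => a b s _ Wa Wb Ws [j _ <-].
have [a' Wa' aa'] := minksum_perturb lm WM Wa.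
have [b' Wb' bb'] := minksum_perturb lm WM Wb.
have [s' Ws' ss'] := minksum_perturb lm WM Ws.
have osc_mj := osc (m, j) (mem_enum _ _).
have := dist_le_through aa' bb' ss' (osc_mj _ _ Wa' Ws') (osc_mj _ _ Wb' Ws').
move: NM; have -> : n%:R * N%:R^-1 * M = n%:R * M / N%:R by ring.
lra.
Qed.
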